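(* Let $(M,ds^2)$ be an $n$-dimensional Riemannian manifold, $1\le p\le n$. For every $x\in M$ and every $p$-form $g$ at $x$, $$p(n-p)\lambda_{\mathfrak R}(x)|g|^2\le\sum_{i_1<\cdots<i_p}\langle\mathfrak R\xi^g_{i_1\cdots i_p},\xi^g_{i_1\cdots i_p}\rangle\le p(n-p)\Lambda_{\mathfrak R}(x)|g|^2.$$
   Context: Local orthonormal frame $e_i$ with dual coframe $\omega^i$, summation convention; $g=\sum_{i_1<\dots<i_p}g_{i_1\cdots i_p}\omega^{i_1}\wedge\dots\wedge\omega^{i_p}$ with antisymmetrically extended coefficients. Curvature: $R_{XY}=D_XD_Y-D_YD_X-D_{[X,Y]}$ for the Levi-Civita connection $D$, $R_{ijk\ell}=\langle R_{e_ie_j}e_k,e_\ell\rangle$, and the curvature operator $\mathfrak R$ on $2$-forms is the self-adjoint map $\mathfrak R(\omega^i\wedge\omega^j)=R_{ij\ell k}\,\omega^k\wedge\omega^\ell$; $\lambda_{\mathfrak R}(x)$ and $\Lambda_{\mathfrak R}(x)$ are its smallest and largest eigenvalues at $x$. For $i_1<\dots<i_p$, $\xi^g_{i_1\cdots i_p}:=\sum_{a=1}^p\sum_{i=1}^n g_{i_1\cdots(i)_a\cdots i_p}\,\omega^i\wedge\omega^{i_a}$, where $(i)_a$ means the index in the $a$-th slot is replaced by $i$. *)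

(* Pointwise (linear-algebraic) rendering of Lemma 7.4. *)
From HB Require Import structures.
From mathcomp Require Import all_boot all_order all_algebra all_fingroup.
Set Implicit Arguments. Unset Strict Implicit. Unset Printing Implicit Defensive.
Import Order.TTheory GRing.Theory Num.Theory.
Local Open Scope ring_scope.

(* Index pairs k < l : the orthonormal basis w^k /\ w^l (k<l) of 2-forms. *)
Definition pair2 (n : nat) := {kl : 'I_n * 'I_n | (kl.1 < kl.2)%N}.

Definition dim2 (n : nat) : nat := #|{: pair2 n}|.
Definition bidx (n : nat) (m : 'I_(dim2 n)) : pair2 n := enum_val m.

(* Algebraic curvature tensor R_{ijkl} (values at the point x in an
   orthonormal frame): the symmetries of the Riemann tensor. *)
Definition curvature_tensor (R : numDomainType) (n : nat)
  (Rc : 'I_n -> 'I_n -> 'I_n -> 'I_n -> R) : Prop :=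
  [/\ (forall i j k l, Rc i j k l = - Rc j i k l),
      (forall i j k l, Rc i j k l = - Rc i j l k),
      (forall i j k l, Rc i j k l = Rc k l i j) &
      (forall i j k l, Rc i j k l + Rc j k i l + Rc k i j l = 0)].

(* Matrix of the curvature operator in the basis w^k/\w^l (k<l), acting on
   row vectors (mathcomp's convention: v *m A).  Since
   R(w^i/\w^j) = sum_{k,l} R_{ijlk} w^k/\w^l, the coefficient on w^k/\w^l
   (k<l) is R_{ijlk} - R_{ijkl}. *)
Definition curvop (R : numDomainType) (n : nat)
  (Rc : 'I_n -> 'I_n -> 'I_n -> 'I_n -> R) : 'M[R]_(dim2 n) :=
  \matrix_(a, b)
    let: (i, j) := val (bidx a) in let: (k, l) := val (bidx b) in
    Rc i j l k - Rc i j k l.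

Definition dot2 (R : numDomainType) (n : nat) (u v : 'rV[R]_(dim2 n)) : R :=
  \sum_(m < dim2 n) u 0 m * v 0 m.

Definition mindex (p n : nat) := {ffun 'I_p -> 'I_n}.

Definition increasing (p n : nat) (I : mindex p n) : bool :=
  [forall a : 'I_p, forall b : 'I_p, (a < b)%N ==> (I a < I b)%N].

Definition repl (p n : nat) (I : mindex p n) (a : 'I_p) (i : 'I_n) : mindex p n :=
  [ffun b => if b == a then i else I b].

(* A p-form g at x: its antisymmetrically extended coefficient function. *)
Definition alternating (R : numDomainType) (p n : nat) (g : mindex p n -> R) : Prop :=
  forall (I : mindex p n) (a b : 'I_p), a != b ->
    g [ffun c => I (tperm a b c)] = - g I.

Definition formnorm2 (R : numDomainType) (p n : nat) (g : mindex p n -> R) : R :=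
  \sum_(I : mindex p n | increasing I) g I ^+ 2.

(* xi^g_I = sum_a sum_i g_{I[a:=i]} w^i /\ w^{i_a}; as a 2-form written
   sum_{i,j} c_{ij} w^i/\w^j with c_{ij} = sum_a [i_a = j] g_{I[a:=i]}, its
   coefficient on w^k/\w^l (k<l) is c_{kl} - c_{lk}. *)
Definition xi (R : numDomainType) (p n : nat) (g : mindex p n -> R)
  (I : mindex p n) : 'rV[R]_(dim2 n) :=
  \row_m let: (k, l) := val (bidx m) in
    \sum_(a < p) ((I a == l)%:R * g (repl I a k) - (I a == k)%:R * g (repl I a l)).

Definition curv_xi_sum (R : numDomainType) (p n : nat)
  (Rc : 'I_n -> 'I_n -> 'I_n -> 'I_n -> R) (g : mindex p n -> R) : R :=
  \sum_(I : mindex p n | increasing I) dot2 (xi g I *m curvop Rc) (xi g I).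

From HB Require Import structures.
From mathcomp Require Import all_boot all_order all_algebra all_fingroup.
From mathcomp Require Import complex.
Import Order.TTheory GRing.Theory Num.Theory.
Set Implicit Arguments. Unset Strict Implicit. Unset Printing Implicit Defensive.
Local Open Scope ring_scope.

(* The curvature operator is symmetric (pair symmetry of R_ijkl), so
   the Rayleigh bounds lam |v|^2 <= <v R, v> <= Lam |v|^2 hold on 2-forms;
   they follow from the spectral theorem for the (hermitian) complexification.
   Applied to each xi^g_I, this reduces the lemma to the identity
     sum_(I increasing) |xi^g_I|^2 = p (n-p) |g|^2,
   which is combinatorial.  For I with distinct entries, |xi^g_I|^2 equals the
   sum of g^2 over all replacements of one slot of I by an index absent from
   I (g vanishes on repeated indices).  Summed over all distinct I, an
   exchange involution counts every g_J^2 exactly p (n-p) times; and both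
   sides are invariant under permuting slots, so sums over all distinct
   multi-indices are p! times sums over increasing ones (sorting). *)

Section RealSymmetricSpectrum.
Variable R : rcfType.
Local Notation toC := (real_complex R).
Local Open Scope sesquilinear_scope.

Lemma complexified_sym_herm N (A : 'M[R]_N) :
  A^T = A -> map_mx toC A \is hermsymmx.
Proof.
move=> tA; apply/is_hermitianmxP; rewrite expr0 scale1r map_trmx tA.
by apply/matrixP => i j; rewrite !mxE conj_Creal // complex_real.
Qed.

Lemma spectral_diag_real N (A : 'M[R]_N) (i : 'I_N) : A^T = A ->
  let D := spectral_diag (map_mx toC A) in D 0 i = toC (complex.Re (D 0 i)).
Proof.
move=> /complexified_sym_herm herm D; rewrite RRe_real //.
exact: (mxOverP (hermitian_spectral_diag_real herm)).
Qed.

Lemma spectral_diag_eigenvalue N (A : 'M[R]_N) (i : 'I_N) : A^T = A ->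
  eigenvalue A (complex.Re (spectral_diag (map_mx toC A) 0 i)).
Proof.
move=> tA; have Dreal := spectral_diag_real i tA.
have /orthomx_spectralP := hermitian_normalmx (complexified_sym_herm tA).
set Ac := map_mx toC A; set P := spectralmx Ac; set D := spectral_diag Ac => eqA.
have PPt : P *m P ^t* = 1%:M by apply/unitarymxP/spectral_unitarymx.
have PA : P *m Ac = diag_mx D *m P.
  by rewrite {1}eqA !mulmxA mulmxV ?spectral_unit // mul1mx.
(* Row i of the unitary P is a (nonzero) eigenvector of Ac for D 0 i. *)
have : eigenvalue Ac (D 0 i).
  apply/eigenvalueP; exists (row i P).
    by rewrite -row_mul PA row_mul row_diag_mx -scalemxAl -rowE.
  apply/negP => /eqP Pi0.
  have /matrixP /(_ 0 i) := congr1 (row i) PPt.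
  by rewrite row_mul Pi0 mul0mx !mxE eqxx /= => /eqP; rewrite eq_sym oner_eq0.
rewrite eigenvalue_root_char -map_char_poly Dreal fmorph_root.
by rewrite -eigenvalue_root_char.
Qed.

Lemma complexified_dot N (u v : 'rV[R]_N) :
  toC (\sum_i u 0 i * v 0 i) = (map_mx toC u *m (map_mx toC v) ^t*) 0 0.
Proof.
rewrite rmorph_sum mxE; apply: eq_bigr => i _.
by rewrite !mxE rmorphM conj_Creal // complex_real.
Qed.

Lemma sym_quadratic_form_decomp N (A : 'M[R]_N) (x : 'rV[R]_N) : A^T = A ->
  exists d w : 'I_N -> R, [/\ forall i, eigenvalue A (d i), forall i, 0 <= w i,
   \sum_i x 0 i ^+ 2 = \sum_i w i & \sum_i (x *m A) 0 i * x 0 i = \sum_i w i * d i].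
Proof.
move=> tA.
have /orthomx_spectralP := hermitian_normalmx (complexified_sym_herm tA).
set Ac := map_mx toC A; set P := spectralmx Ac; set D := spectral_diag Ac => eqA.
have PtP : P ^t* *m P = 1%:M.
  by rewrite -invmx_unitary ?spectral_unitarymx // mulVmx ?spectral_unit.
pose d i := complex.Re (D 0 i).
have Dd i : D 0 i = toC (d i) by apply: spectral_diag_real.
(* In the coordinates y = x P^*, both forms become diagonal. *)
pose xC := map_mx toC x; pose y := xC *m P ^t*.
pose w i := complex.Re (y 0 i * (y 0 i)^*).
have yy i : y 0 i * (y 0 i)^* = toC (w i).
  by rewrite /w RRe_real // ger0_real // mul_conjC_ge0.
exists d, w; split.
- by move=> i; apply: spectral_diag_eigenvalue.
- by move=> i; rewrite -lecR -yy mul_conjC_ge0.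
- apply: complexI; under eq_bigr do rewrite expr2.
  rewrite complexified_dot.
  have -> : xC *m xC ^t* = y *m y ^t*.
    by rewrite /y trmx_mul map_mxM trmxCK !mulmxA -(mulmxA xC) PtP mulmx1.
  by rewrite rmorph_sum mxE; apply: eq_bigr => j _; rewrite -[RHS]/(toC (w j)) -yy !mxE.
- apply: complexI; rewrite complexified_dot map_mxM.
  have -> : xC *m Ac *m xC ^t* = y *m diag_mx D *m y ^t*.
    by rewrite /y trmx_mul map_mxM trmxCK {1}eqA invmx_unitary ?spectral_unitarymx // !mulmxA.
  rewrite rmorph_sum mxE; apply: eq_bigr => j _; rewrite rmorphM.
  by rewrite -[toC (w j) * _]/(toC (w j) * toC (d j)) -yy -Dd mul_mx_diag !mxE mulrAC.
Qed.

Lemma rayleigh_lower N (A : 'M[R]_N) (lam : R) (x : 'rV[R]_N) : A^T = A ->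
  (forall mu, eigenvalue A mu -> lam <= mu) ->
  lam * \sum_i x 0 i ^+ 2 <= \sum_i (x *m A) 0 i * x 0 i.
Proof.
move=> tA lam_le; have [d [w [eig_d w_ge0 -> ->]]] := sym_quadratic_form_decomp x tA.
by rewrite mulr_sumr; apply: ler_sum => i _; rewrite mulrC ler_wpM2l ?lam_le.
Qed.

Lemma rayleigh_upper N (A : 'M[R]_N) (Lam : R) (x : 'rV[R]_N) : A^T = A ->
  (forall mu, eigenvalue A mu -> mu <= Lam) ->
  \sum_i (x *m A) 0 i * x 0 i <= Lam * \sum_i x 0 i ^+ 2.
Proof.
move=> tA le_Lam; have [d [w [eig_d w_ge0 -> ->]]] := sym_quadratic_form_decomp x tA.
by rewrite mulr_sumr; apply: ler_sum => i _; rewrite [Lam * _]mulrC ler_wpM2l ?le_Lam.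
Qed.
End RealSymmetricSpectrum.

(* The pair symmetry R_ijkl = R_klij (with the antisymmetries) makes the
   curvature operator self-adjoint. *)
Lemma curvop_sym (R : numDomainType) n (Rc : 'I_n -> 'I_n -> 'I_n -> 'I_n -> R) :
  curvature_tensor Rc -> (curvop Rc)^T = curvop Rc.
Proof.
move=> [skew12 skew34 pair_sym _]; apply/matrixP => a b; rewrite !mxE.
case: (val (bidx a)) => i j; case: (val (bidx b)) => k l.
by rewrite (pair_sym k l j i) (pair_sym k l i j) (skew12 j i k l) (skew34 i j l k).
Qed.

Section SlotPermutations.
Variables p n : nat.

Definition permute_slots (I : mindex p n) (s : {perm 'I_p}) : mindex p n :=
  [ffun c => I (s c)].

Definition distinct_slots (I : mindex p n) : bool := injectiveb (fun a => I a).

Lemma permute_slots1 (I : mindex p n) : permute_slots I 1 = I.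
Proof. by apply/ffunP => c; rewrite ffunE perm1. Qed.

Lemma permute_slotsM (I : mindex p n) (s t : {perm 'I_p}) :
  permute_slots I (s * t) = permute_slots (permute_slots I t) s.
Proof. by apply/ffunP => c; rewrite !ffunE permM. Qed.

Lemma distinct_permute_slots (I : mindex p n) s :
  distinct_slots (permute_slots I s) = distinct_slots I.
Proof.
apply/injectiveP/injectiveP => Iinj a b.
  move=> Iab; have := Iinj (s^-1 a)%g (s^-1 b)%g; rewrite !ffunE !permKV => /(_ Iab).
  exact: (can_inj (permKV s)).
by rewrite !ffunE => /Iinj /perm_inj.
Qed.

Lemma increasing_distinct (I : mindex p n) : increasing I -> distinct_slots I.
Proof.
move=> /forallP Iincr; apply/injectiveP => a b Iab.
case: (ltngtP a b) => [ab | ba | /val_inj //].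
- by have := implyP (forallP (Iincr a) b) ab; rewrite Iab ltnn.
- by have := implyP (forallP (Iincr b) a) ba; rewrite Iab ltnn.
Qed.

(* Sorting a multi-index with distinct entries: the rank of slot b is the
   number of slots carrying a smaller entry; the inverse of the rank
   permutation is the unique rearrangement of J into increasing order. *)
Section Sorting.
Variable J : mindex p n.
Hypothesis Jinj : injective J.

Lemma rank_lt b : (#|[pred c | (J c < J b)%N]| < p)%N.
Proof.
rewrite -[p in (_ < p)%N]card_ord; apply: proper_card.
by apply/properP; split; [apply/subsetP | exists b; rewrite ?inE ?ltnn].
Qed.

Definition rank b : 'I_p := Ordinal (rank_lt b).

Lemma rank_mono x y : (J x < J y)%N -> (rank x < rank y)%N.
Proof.
move=> Jxy; apply: proper_card; apply/properP; split.
  by apply/subsetP => c; rewrite !inE => /ltn_trans; apply.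
by exists x; rewrite ?inE ?ltnn.
Qed.

Lemma rank_inj : injective rank.
Proof.
move=> x y Exy; case: (ltngtP (J x) (J y)) => [lt | gt | /val_inj /Jinj //].
- by have := rank_mono lt; rewrite Exy ltnn.
- by have := rank_mono gt; rewrite Exy ltnn.
Qed.

Lemma rank_monoV x y : (rank x < rank y)%N -> (J x < J y)%N.
Proof.
case: (ltngtP (J x) (J y)) => // [gt | /val_inj /Jinj ->]; last by rewrite ltnn.
by move=> /ltn_trans /(_ (rank_mono gt)); rewrite ltnn.
Qed.

Definition sort_perm : {perm 'I_p} := (perm rank_inj)^-1.

Lemma rank_sort_perm c : rank (sort_perm c) = c.
Proof. by have := permKV (perm rank_inj) c; rewrite permE. Qed.

Lemma sort_perm_increasing : increasing (permute_slots J sort_perm).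
Proof.
apply/forallP => a; apply/forallP => b; apply/implyP => ab.
by rewrite !ffunE; apply: rank_monoV; rewrite !rank_sort_perm.
Qed.

Lemma card_ord_lt (a : 'I_p) : #|[pred c : 'I_p | (c < a)%N]| = a.
Proof.
rewrite -sum1_card (big_ord_narrow_cond (P := xpredT) (ltnW (ltn_ord a))) /=.
by rewrite sum1_card card_ord.
Qed.

Lemma sort_perm_unique s : increasing (permute_slots J s) -> s = sort_perm.
Proof.
move=> /forallP incr.
have s_mono (a b : 'I_p) : (a < b)%N -> (J (s a) < J (s b))%N.
  by move=> ab; have := implyP (forallP (incr a) b) ab; rewrite !ffunE.
have rank_s a : rank (s a) = a.
  apply: val_inj => /=; rewrite -(card_ord_lt a).
  have -> : #|[pred c | (J c < J (s a))%N]| =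
            #|[preim s of [pred c | (J c < J (s a))%N]]|.
    rewrite card_preim; last exact: perm_inj.
    by apply: eq_card => c; rewrite !inE -[c](permKV s) codom_f.
  apply: eq_card => c; rewrite !inE.
  case: (ltngtP c a) => [ca | ac | /val_inj ->]; last by rewrite ltnn.
  - by rewrite s_mono.
  - by apply/negbTE; rewrite -leqNgt ltnW // s_mono.
apply/permP => a; apply: (canRL (permK (perm rank_inj))).
by rewrite permE rank_s.
Qed.
End Sorting.

(* A function of multi-indices vanishing on repeated entries and invariant
   under permuting slots: its total sum is p! times its sum over increasing
   multi-indices (each distinct J is uniquely a rearrangement of one). *)
Lemma sum_symmetric_mindex (V : nmodType) (F : mindex p n -> V) :
  (forall J, ~~ distinct_slots J -> F J = 0) ->
  (forall J s, F (permute_slots J s) = F J) ->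
  \sum_J F J = (\sum_(J | increasing J) F J) *+ p`!.
Proof.
move=> F0 Finv.
transitivity (\sum_J \sum_(s : 'S_p | increasing (permute_slots J s)) F J).
  apply: eq_bigr => J _.
  have [/injectiveP Jinj | nJ] := boolP (distinct_slots J); last by rewrite F0 // big1.
  rewrite (big_pred1 (sort_perm Jinj)) // => s /=.
  apply/idP/eqP => [/(sort_perm_unique Jinj) // | ->]; exact: sort_perm_increasing.
rewrite (exchange_big_dep xpredT) //=.
transitivity (\sum_(s : 'S_p) \sum_(J | increasing J) F J).
  apply: eq_bigr => s _; symmetry.
  rewrite (reindex (permute_slots^~ s)) /=; first by apply: eq_bigr => J _; rewrite Finv.
  by exists (permute_slots^~ (s^-1)%g) => K _; rewrite -permute_slotsM ?mulVg ?mulgV permute_slots1.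
by rewrite sumr_const card_Sn.
Qed.
End SlotPermutations.

Lemma sum_dim2 (V : nmodType) n (F : 'I_n * 'I_n -> V) :
  \sum_(m < dim2 n) F (val (bidx m)) = \sum_(kl : 'I_n * 'I_n | (kl.1 < kl.2)%N) F kl.
Proof.
transitivity (\sum_(x : pair2 n) F (val x)).
  rewrite [RHS](eq_bigl (fun x => x \in {: pair2 n})) // [RHS]big_enum_val.
  by apply: eq_bigr.
symmetry; rewrite (reindex_omap (val : pair2 n -> _) insub) => [|kl lt_kl]; last first.
  by rewrite insubT.
by apply: eq_bigl => -[kl lt_kl] /=; rewrite insubT lt_kl /= eqxx.
Qed.

Lemma sum_lt_pairs_sym (V : nmodType) n (F : 'I_n -> 'I_n -> V) :
  \sum_(kl : 'I_n * 'I_n | (kl.1 < kl.2)%N) (F kl.1 kl.2 + F kl.2 kl.1) =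
  \sum_(kl : 'I_n * 'I_n | kl.1 != kl.2) F kl.1 kl.2.
Proof.
rewrite big_split /= [X in _ + X](reindex_inj (h := fun kl => (kl.2, kl.1))) /=; last first.
  by move=> [a b] [c d] /= [-> ->].
rewrite [RHS](bigID (fun kl : 'I_n * 'I_n => (kl.1 < kl.2)%N)) /=.
by congr (_ + _); apply: eq_bigl => -[k l] /=; rewrite -(inj_eq val_inj) /=; case: ltngtP.
Qed.

Section Replacement.
Variables p n : nat.

Definition absent (I : mindex p n) (k : 'I_n) : bool := [forall b, I b != k].

Lemma repl_at (J : mindex p n) a m : repl J a m a = m.
Proof. by rewrite ffunE eqxx. Qed.

Lemma repl_repl (J : mindex p n) a m : repl (repl J a m) a (J a) = J.
Proof. by apply/ffunP => c; rewrite !ffunE; case: eqP => // ->. Qed.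

Lemma repl_permute_slots (I : mindex p n) (s : {perm 'I_p}) a k :
  repl (permute_slots I s) a k = permute_slots (repl I (s a) k) s.
Proof.
by apply/ffunP => c; rewrite !ffunE (inj_eq (@perm_inj _ s)); case: (c == a).
Qed.

Lemma absent_permute_slots (I : mindex p n) s k :
  absent (permute_slots I s) k = absent I k.
Proof.
apply/forallP/forallP => Ik b; last by rewrite ffunE.
by have := Ik ((s^-1)%g b); rewrite ffunE permKV.
Qed.

Lemma repl_present_repeated (I : mindex p n) a b k :
  a != b -> I b = k -> ~~ distinct_slots (repl I a k).
Proof.
move=> ab Ib; apply/injectiveP => /(_ a b).
by rewrite !ffunE eqxx eq_sym (negbTE ab) Ib => /(_ erefl) /eqP; rewrite (negbTE ab).
Qed.

Lemma present_other_slot (I : mindex p n) a k :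
  ~~ absent I k -> k != I a -> exists2 b, a != b & I b = k.
Proof.
rewrite negb_forall => /existsP [b /negPn /eqP Ib] kIa.
by exists b => //; apply: contraNneq kIa => ->; rewrite Ib.
Qed.

(* Replacing slot a of a distinct J by an absent m gives a distinct
   multi-index from which J a is absent: the exchange (J, m) <-> (J[a:=m], J a)
   is an involution on such pairs. *)
Lemma repl_exchange (J : mindex p n) a m : distinct_slots J -> absent J m ->
  distinct_slots (repl J a m) && absent (repl J a m) (J a).
Proof.
move=> /injectiveP Jinj /forallP Jm; apply/andP; split.
  apply/injectiveP => c d; rewrite !ffunE.
  case: (eqVneq c a) => [->|ca]; case: (eqVneq d a) => [->|da] //.
  - by move=> Em; have := Jm d; rewrite Em eqxx.
  - by move=> Em; have := Jm c; rewrite Em eqxx.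
  - exact: Jinj.
apply/forallP => b; rewrite ffunE.
case: (eqVneq b a) => [_|ba]; first by rewrite eq_sym Jm.
by apply/negP => /eqP /Jinj /eqP; rewrite (negbTE ba).
Qed.

Lemma card_absent (J : mindex p n) :
  distinct_slots J -> #|[pred k | absent J k]| = (n - p)%N.
Proof.
move=> /injectiveP Jinj.
have -> : #|[pred k | absent J k]| = #|[predC codom J]|.
  apply: eq_card => k; rewrite !inE; apply/forallP/idP => [Jk | /codomP Jk b].
    by apply/codomP => -[b Eb]; have := Jk b; rewrite Eb eqxx.
  by apply/eqP => Eb; apply: Jk; exists b.
have := cardC (mem (codom J)); rewrite card_codom // !card_ord => card_n.
by rewrite -[in RHS]card_n addKn.
Qed.
End Replacement.

Section AlternatingForm.
Variable R : numDomainType.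
Variables p n : nat.
Variable g : mindex p n -> R.
Hypothesis galt : alternating g.

Lemma alternating_repeated (I : mindex p n) : ~~ distinct_slots I -> g I = 0.
Proof.
move=> /injectivePn [a [b ab Iab]].
have swapI : [ffun c => I (tperm a b c)] = I.
  by apply/ffunP => c; rewrite ffunE; case: tpermP => // ->.
have := galt I ab; rewrite swapI => /eqP; rewrite -subr_eq0 opprK -mulr2n.
by rewrite mulrn_eq0 => /eqP.
Qed.

(* Permuting the slots changes g only by a sign, so g^2 is invariant. *)
Lemma alternating_sq_permute (J : mindex p n) (s : {perm 'I_p}) :
  g (permute_slots J s) ^+ 2 = g J ^+ 2.
Proof.
have [ts -> dts] := prod_tpermP s.
elim: ts J dts => [|[a b] ts IH] J /=; first by rewrite big_nil permute_slots1.
move=> /andP [ab dts]; rewrite big_cons permute_slotsM.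
have := galt (permute_slots J (\prod_(t <- ts) tperm t.1 t.2)) ab.
by rewrite /permute_slots => ->; rewrite sqrrN IH.
Qed.

(* |xi^g_I|^2 for distinct I, in closed form: the total squared mass of the
   single-slot replacements of I by an index absent from I. *)
Definition replacement_sum (I : mindex p n) : R :=
  \sum_(a < p) \sum_(k | absent I k) g (repl I a k) ^+ 2.

Lemma replacement_sum_permute (I : mindex p n) (s : {perm 'I_p}) :
  replacement_sum (permute_slots I s) = replacement_sum I.
Proof.
rewrite /replacement_sum [RHS](reindex_inj (@perm_inj _ s)) /=.
apply: eq_bigr => a _; apply: eq_big => [k | k _]; first exact: absent_permute_slots.
by rewrite repl_permute_slots alternating_sq_permute.
Qed.

(* Double counting through the exchange involution (I, k) <-> (I[a:=k], I a):
   for each slot a, each g_J^2 with J distinct arises n - p times. *)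
Lemma sum_replacement_sum :
  \sum_(I | distinct_slots I) replacement_sum I = (p * (n - p))%:R * \sum_J g J ^+ 2.
Proof.
rewrite /replacement_sum exchange_big /= natrM -mulrA mulr_natl -[X in _ *+ X](card_ord p) -sumr_const.
apply: eq_bigr => a _.
rewrite (pair_big_dep (@distinct_slots p n) (@absent p n) (fun I k => g (repl I a k) ^+ 2)) /=.
pose exch (x : mindex p n * 'I_n) := (repl x.1 a x.2, x.1 a).
have exchK : involutive exch by move=> [J m]; rewrite /exch /= repl_repl repl_at.
rewrite (reindex exch) /=; last by exists exch => x _; apply: exchK.
rewrite (eq_bigl (fun x => distinct_slots x.1 && absent x.1 x.2)); last first.
  move=> [J m] /=; apply/idP/idP => /andP [J_dist Jm]; last exact: repl_exchange.
  by have := repl_exchange a J_dist Jm; rewrite repl_repl repl_at.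
rewrite (eq_bigr (fun x => g x.1 ^+ 2)) => [|[J m] _]; last by rewrite /= repl_repl.
rewrite -(pair_big_dep (@distinct_slots p n) (@absent p n) (fun J k => g J ^+ 2)) /=.
rewrite mulr_sumr [RHS](bigID (@distinct_slots p n)) /= [X in _ = _ + X]big1 ?addr0.
  by apply: eq_bigr => J J_dist; rewrite sumr_const card_absent // mulr_natl.
by move=> J /alternating_repeated ->; rewrite expr0n mulr0.
Qed.
End AlternatingForm.

(* Writing
   xi^g_I = sum_(k,l) c_kl w^k /\ w^l with c_kl = sum_a [I_a = l] g_(I[a:=k]),
   the coefficient on w^k /\ w^l (k < l) is c_kl - c_lk; at most one of c_kl,
   c_lk is nonzero, and c_kl^2 collects the replacements of the slot holding l
   by k. *)
Section XiNorm.
Variable R : numDomainType.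
Variables p n : nat.
Variable g : mindex p n -> R.
Hypothesis galt : alternating g.
Variable I : mindex p n.
Hypothesis I_dist : distinct_slots I.

Definition xi_coef (k l : 'I_n) : R := \sum_(a < p) (I a == l)%:R * g (repl I a k).

(* If k occurs in I then writing k into the slot holding l != k repeats k. *)
Lemma xi_coef_cross k l : k != l -> xi_coef k l * xi_coef l k = 0.
Proof.
move=> kl; have [k_abs | k_pres] := boolP (absent I k).
  rewrite [xi_coef l k]big1 ?mulr0 // => a _.
  by have := forallP k_abs a => /negbTE ->; rewrite mul0r.
rewrite [xi_coef k l]big1 ?mul0r // => a _.
have [Ial|] := eqVneq (I a) l; last by rewrite mulr0n mul0r.
have kIa : k != I a by rewrite Ial.
have [b ab Ib] := present_other_slot k_pres kIa.
by rewrite alternating_repeated ?mulr0 // (repl_present_repeated ab Ib).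
Qed.

(* I being distinct, at most one slot holds l, so c_kl^2 has no cross terms. *)
Lemma xi_coef_sq k l :
  xi_coef k l ^+ 2 = \sum_(a < p) (I a == l)%:R * g (repl I a k) ^+ 2.
Proof.
rewrite expr2 /xi_coef mulr_suml; apply: eq_bigr => a _.
rewrite mulr_sumr (bigD1 a) //= big1 ?addr0 => [|b ba].
  by case: (I a == l); rewrite ?mul1r ?mul0r ?expr2 ?mulr0.
have [Ial|] := eqVneq (I a) l; last by rewrite mulr0n !mul0r.
have [Ibl|] := eqVneq (I b) l; last by rewrite mulr0n mul0r !mulr0.
by move/injectiveP: I_dist => /(_ b a); rewrite Ial Ibl => /(_ erefl) /eqP; rewrite (negbTE ba).
Qed.

(* Summing c_kl^2 over ordered pairs k != l: for each slot a only l = I a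
   contributes, and the k != I a that are present in I give repeated indices. *)
Lemma sum_xi_coef_sq :
  \sum_(kl : 'I_n * 'I_n | kl.1 != kl.2) xi_coef kl.1 kl.2 ^+ 2 = replacement_sum g I.
Proof.
under eq_bigr do rewrite xi_coef_sq.
rewrite exchange_big /replacement_sum; apply: eq_bigr => a _.
pose G k := g (repl I a k) ^+ 2.
transitivity (\sum_k \sum_(l | k != l) (I a == l)%:R * G k).
  by rewrite pair_big_dep; apply: eq_bigl => -[k l].
rewrite [RHS]big_mkcond; apply: eq_bigr => k _; rewrite -big_distrl /=.
have [kIa | kIa] := eqVneq k (I a).
  rewrite big1 ?mul0r => [|l]; last by rewrite kIa eq_sym => /negbTE ->.
  by rewrite kIa; case: ifP => // /forallP /(_ a); rewrite eqxx.
rewrite (bigD1 (I a)) //= big1 ?addr0 ?eqxx ?mul1r => [|l /andP [_ /negbTE]]; last first.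
  by rewrite eq_sym => ->.
have [// | k_pres] := boolP (absent I k).
have [b ab Ib] := present_other_slot k_pres kIa.
by rewrite /G alternating_repeated ?expr0n // (repl_present_repeated ab Ib).
Qed.

Lemma xi_norm : \sum_(m < dim2 n) (xi g I) 0 m ^+ 2 = replacement_sum g I.
Proof.
pose F (kl : 'I_n * 'I_n) := (xi_coef kl.1 kl.2 - xi_coef kl.2 kl.1) ^+ 2.
rewrite (eq_bigr (fun m => F (val (bidx m)))) => [|m _]; last first.
  by rewrite mxE /F; case: (val (bidx m)) => k l; rewrite -sumrB.
rewrite sum_dim2 -sum_xi_coef_sq -(sum_lt_pairs_sym (fun k l => xi_coef k l ^+ 2)).
apply: eq_bigr => -[k l] /= lt_kl.
rewrite /F /= sqrrB xi_coef_cross ?mul0rn ?subr0 //.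
by apply: contraTneq lt_kl => ->; rewrite ltnn.
Qed.
End XiNorm.

(* The key identity: sum_(I increasing) |xi^g_I|^2 = p (n - p) |g|^2.  Both
   |xi^g_I|^2 (= replacement_sum for distinct I, set to 0 otherwise) and g_I^2
   are symmetric under slot permutations, so the identity follows from the
   double count over all distinct multi-indices after multiplying by p!. *)
Lemma sum_xi_norm (R : numDomainType) p n (g : mindex p n -> R) : alternating g ->
  \sum_(I | increasing I) \sum_(m < dim2 n) (xi g I) 0 m ^+ 2
  = (p * (n - p))%:R * formnorm2 g.
Proof.
move=> galt; apply: (pmulrnI (fact_gt0 p)); rewrite /= /formnorm2 -mulrnAr.
pose E I := if distinct_slots I then replacement_sum g I else 0.
have E0 J : ~~ distinct_slots J -> E J = 0 by rewrite /E => /negbTE ->.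
have E_sym J s : E (permute_slots J s) = E J.
  by rewrite /E distinct_permute_slots replacement_sum_permute.
have sq0 J : ~~ distinct_slots J -> g J ^+ 2 = 0.
  by move=> /(alternating_repeated galt) ->; rewrite expr0n.
have sq_sym J s : g (permute_slots J s) ^+ 2 = g J ^+ 2.
  exact: alternating_sq_permute.
have -> : \sum_(I | increasing I) \sum_(m < dim2 n) (xi g I) 0 m ^+ 2 =
          \sum_(I | increasing I) E I.
  by apply: eq_bigr => I /increasing_distinct I_dist; rewrite /E I_dist xi_norm.
rewrite -(sum_symmetric_mindex E0 E_sym) -(sum_symmetric_mindex sq0 sq_sym).
by rewrite -sum_replacement_sum // [RHS]big_mkcond.
Qed.

Theorem lemma7p4 (R : rcfType) (n p : nat)
  (Rc : 'I_n -> 'I_n -> 'I_n -> 'I_n -> R) (lam Lam : R)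
  (g : mindex p n -> R) :
  (1 <= p)%N -> (p <= n)%N ->
  curvature_tensor Rc ->
  eigenvalue (curvop Rc) lam ->
  (forall mu, eigenvalue (curvop Rc) mu -> lam <= mu) ->
  eigenvalue (curvop Rc) Lam ->
  (forall mu, eigenvalue (curvop Rc) mu -> mu <= Lam) ->
  alternating g ->
  (p * (n - p))%:R * lam * formnorm2 g <= curv_xi_sum Rc g /\
  curv_xi_sum Rc g <= (p * (n - p))%:R * Lam * formnorm2 g.
Proof.
move=> _ _ Rc_curv _ lam_le _ le_Lam galt.
have sym := curvop_sym Rc_curv.
rewrite /curv_xi_sum /dot2 !(mulrAC _ _ (formnorm2 g)) -sum_xi_norm // !mulr_suml.
by split; apply: ler_sum => I _; rewrite mulrC; [apply: rayleigh_lower | apply: rayleigh_upper].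
Qed.
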